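(* Let $(L,\delta,\alpha,\beta)$ be a BiHom-Lie algebra, $(V,\alpha_V,\beta_V)$ an abelian BiHom-Lie algebra, $(\lambda_l,\lambda_r)$ a representation of $L$ on $V$, and let $\theta,\theta'$ be $2$-cocycles of $L$ on $V$ with respect to $(\lambda_l,\lambda_r)$ which are equivalent, i.e. $\theta'-\theta=D_1(h)$ for some $h\in C^1(L,V)$. Define $d,d'$ on $L\oplus V$ by $d(x+v,y+w)=\delta(x,y)+\theta(x,y)+\lambda_l(x,w)+\lambda_r(v,y)$ and $d'(x+v,y+w)=\delta(x,y)+\theta'(x,y)+\lambda_l(x,w)+\lambda_r(v,y)$. Then the extensions $$0\to(V,\alpha_V,\beta_V)\xrightarrow{i_0}(L\oplus V,d,\alpha+\alpha_V,\beta+\beta_V)\xrightarrow{\pi_0}(L,\delta,\alpha,\beta)\to0$$ and $$0\to(V,\alpha_V,\beta_V)\xrightarrow{i_0}(L\oplus V,d',\alpha+\alpha_V,\beta+\beta_V)\xrightarrow{\pi_0}(L,\delta,\alpha,\beta)\to0,$$ where $i_0(v)=v$, $\pi_0(x+v)=x$, are equivalent.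
   Context: All vector spaces are over a field $\mathbb{K}$. A BiHom-Lie algebra $(L,\delta,\alpha,\beta)$ is a vector space with bilinear $\delta$ and linear $\alpha,\beta$ such that $\alpha\beta=\beta\alpha$, $\delta(\beta(x),\alpha(y))=-\delta(\beta(y),\alpha(x))$ and $\delta(\beta^2(x),\delta(\beta(y),\alpha(z)))+\delta(\beta^2(y),\delta(\beta(z),\alpha(x)))+\delta(\beta^2(z),\delta(\beta(x),\alpha(y)))=0$. A morphism of BiHom-Lie algebras is a linear map commuting with the two structure maps and the brackets. An abelian BiHom-Lie algebra $(V,\alpha_V,\beta_V)$ has zero bracket and commuting linear maps $\alpha_V,\beta_V$. On $L\oplus V$, $\alpha+\alpha_V$ is $x+v\mapsto\alpha(x)+\alpha_V(v)$, similarly $\beta+\beta_V$. Two extensions $0\to V_1\xrightarrow{i_1}M_1\xrightarrow{\pi_1}L_1\to0$, $0\to V_2\xrightarrow{i_2}M_2\xrightarrow{\pi_2}L_2\to0$ (short exact sequences of BiHom-Lie algebra morphisms) are equivalent if there exist linear maps $\varphi\colon V_1\to V_2$, $s\colon L_1\to L_2$ and an isomorphism of BiHom-Lie algebras $\Phi\colon M_1\to M_2$ with $\Phi\circ i_1=i_2\circ\varphi$ and $\pi_2\circ\Phi=s\circ\pi_1$. A representation of $L$ on $V$ is a pair of bilinear maps $\lambda_l\colon L\times V\to V$, $\lambda_r\colon V\times L\to V$ with, for all $x,y\in L$, $v\in V$: $\lambda_r(\beta_V(v),\alpha(y))=-\lambda_l(\beta(y),\alpha_V(v))$ and $\lambda_l(\beta^2(x),\lambda_l(\beta(y),\alpha_V(v)))+\lambda_l(\beta^2(y),\lambda_r(\beta_V(v),\alpha(x)))+\lambda_r(\beta_V^2(v),\delta(\beta(x),\alpha(y)))=0$.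 A $2$-cocycle is a bilinear $\theta\colon L\times L\to V$ with $\theta(\beta(x),\alpha(y))=-\theta(\beta(y),\alpha(x))$ and $\theta(\beta^2(x),\delta(\beta(y),\alpha(z)))-\theta(\beta^2(y),\delta(\beta(x),\alpha(z)))+\theta(\beta^2(z),\delta(\beta(x),\alpha(y)))+\lambda_l(\beta^2(x),\theta(\beta(y),\alpha(z)))-\lambda_l(\beta^2(y),\theta(\beta(x),\alpha(z)))+\lambda_l(\beta^2(z),\theta(\beta(x),\alpha(y)))=0$ for all $x,y,z$. $C^1(L,V)$ is the set of linear $h\colon L\to V$ with $h\alpha=\alpha_V h$, $h\beta=\beta_V h$, and $D_1(h)(x,y)=-h(\delta(x,y))+\lambda_l(x,h(y))+\lambda_r(h(x),y)$. *)

From HB Require Import structures.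
From mathcomp Require Import all_boot all_order all_algebra.
Set Implicit Arguments. Unset Strict Implicit. Unset Printing Implicit Defensive.
Import GRing.Theory.
Local Open Scope ring_scope.

Section BiHom.
Variable K : fieldType.

Definition is_linear (U W : lmodType K) (f : U -> W) : Prop :=
  forall (a : K) (x y : U), f (a *: x + y) = a *: f x + f y.

Definition is_bilinear (U1 U2 W : lmodType K) (b : U1 -> U2 -> W) : Prop :=
  (forall y, is_linear (fun x => b x y)) /\ (forall x, is_linear (b x)).

Definition bihom_lie (L : lmodType K) (delta : L -> L -> L) (alpha beta : L -> L)
  : Prop :=
  [/\ is_bilinear delta, is_linear alpha, is_linear beta,
      (forall x, alpha (beta x) = beta (alpha x)) &
      (forall x y, delta (beta x) (alpha y) = - delta (beta y) (alpha x)) /\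
      (forall x y z,
         delta (beta (beta x)) (delta (beta y) (alpha z))
       + delta (beta (beta y)) (delta (beta z) (alpha x))
       + delta (beta (beta z)) (delta (beta x) (alpha y)) = 0)].

Definition abelian_bihom_lie (V : lmodType K) (alphaV betaV : V -> V) : Prop :=
  bihom_lie (fun _ _ => 0) alphaV betaV.

Definition bihom_morphism (M1 M2 : lmodType K) (f : M1 -> M2)
  (d1 : M1 -> M1 -> M1) (a1 b1 : M1 -> M1)
  (d2 : M2 -> M2 -> M2) (a2 b2 : M2 -> M2) : Prop :=
  [/\ is_linear f,
      (forall x, f (a1 x) = a2 (f x)),
      (forall x, f (b1 x) = b2 (f x)) &
      (forall x y, f (d1 x y) = d2 (f x) (f y))].

Definition bihom_isomorphism (M1 M2 : lmodType K) (f : M1 -> M2)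
  (d1 : M1 -> M1 -> M1) (a1 b1 : M1 -> M1)
  (d2 : M2 -> M2 -> M2) (a2 b2 : M2 -> M2) : Prop :=
  [/\ bihom_lie d1 a1 b1, bihom_lie d2 a2 b2,
      bihom_morphism f d1 a1 b1 d2 a2 b2 & bijective f].

Definition bihom_extension (V M L : lmodType K)
  (dV : V -> V -> V) (aV bV : V -> V)
  (dM : M -> M -> M) (aM bM : M -> M)
  (dL : L -> L -> L) (aL bL : L -> L)
  (i : V -> M) (p : M -> L) : Prop :=
  [/\ bihom_lie dV aV bV, bihom_lie dM aM bM, bihom_lie dL aL bL,
      bihom_morphism i dV aV bV dM aM bM &
      bihom_morphism p dM aM bM dL aL bL] /\
  [/\ injective i, (forall l, exists m, p m = l) &
      (forall m, p m = 0 <-> exists v, i v = m)].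

Definition equivalent_extensions (V1 M1 L1 V2 M2 L2 : lmodType K)
  (dM1 : M1 -> M1 -> M1) (aM1 bM1 : M1 -> M1) (i1 : V1 -> M1) (p1 : M1 -> L1)
  (dM2 : M2 -> M2 -> M2) (aM2 bM2 : M2 -> M2) (i2 : V2 -> M2) (p2 : M2 -> L2)
  : Prop :=
  exists (phi : V1 -> V2) (s : L1 -> L2) (Phi : M1 -> M2),
    [/\ is_linear phi, is_linear s,
        bihom_isomorphism Phi dM1 aM1 bM1 dM2 aM2 bM2,
        (forall v, Phi (i1 v) = i2 (phi v)) &
        (forall m, p2 (Phi m) = s (p1 m))].

Definition bihom_rep (L V : lmodType K) (delta : L -> L -> L) (alpha beta : L -> L)
  (alphaV betaV : V -> V) (ll : L -> V -> V) (lr : V -> L -> V) : Prop :=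
  [/\ is_bilinear ll, is_bilinear lr,
      (forall y v, lr (betaV v) (alpha y) = - ll (beta y) (alphaV v)) &
      (forall x y v,
         ll (beta (beta x)) (ll (beta y) (alphaV v))
       + ll (beta (beta y)) (lr (betaV v) (alpha x))
       + lr (betaV (betaV v)) (delta (beta x) (alpha y)) = 0)].

Definition two_cocycle (L V : lmodType K) (delta : L -> L -> L) (alpha beta : L -> L)
  (ll : L -> V -> V) (theta : L -> L -> V) : Prop :=
  [/\ is_bilinear theta,
      (forall x y, theta (beta x) (alpha y) = - theta (beta y) (alpha x)) &
      (forall x y z,
         theta (beta (beta x)) (delta (beta y) (alpha z))
       - theta (beta (beta y)) (delta (beta x) (alpha z))
       + theta (beta (beta z)) (delta (beta x) (alpha y))
       + ll (beta (beta x)) (theta (beta y) (alpha z))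
       - ll (beta (beta y)) (theta (beta x) (alpha z))
       + ll (beta (beta z)) (theta (beta x) (alpha y)) = 0)].

Definition C1 (L V : lmodType K) (alpha beta : L -> L) (alphaV betaV : V -> V)
  (h : L -> V) : Prop :=
  [/\ is_linear h, (forall x, h (alpha x) = alphaV (h x)) &
      (forall x, h (beta x) = betaV (h x))].

Definition D1 (L V : lmodType K) (delta : L -> L -> L)
  (ll : L -> V -> V) (lr : V -> L -> V) (h : L -> V) (x y : L) : V :=
  - h (delta x y) + ll x (h y) + lr (h x) y.

Definition ext_bracket (L V : lmodType K) (delta : L -> L -> L) (theta : L -> L -> V)
  (ll : L -> V -> V) (lr : V -> L -> V) (p q : (L * V)%type) : (L * V)%type :=
  (delta p.1 q.1, theta p.1 q.1 + ll p.1 q.2 + lr p.2 q.1).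

Definition sum_map (L V : lmodType K) (f : L -> L) (g : V -> V) (p : (L * V)%type)
  : (L * V)%type := (f p.1, g p.2).

Definition i0 (L V : lmodType K) (v : V) : (L * V)%type := (0, v).
Definition pi0 (L V : lmodType K) (p : (L * V)%type) : L := p.1.

End BiHom.

(* Cohomologous cocycles give isomorphic extensions: if theta' - theta = D1 h,
   the shear (x, v) |-> (x, v - h x) of L (+) V carries the bracket built from
   theta to the one built from theta'.  It is the identity on V and over L, and
   it commutes with the structure maps because h lies in C^1(L, V).  That each
   L (+) V is a BiHom-Lie algebra at all is the usual computation: its
   BiHom-Jacobi identity splits into the Jacobi identity of L, the cocycle
   identity of theta, and the representation identity applied to each of the
   three V-components. *)
From mathcomp Require Import all_boot all_order all_algebra.
Set Implicit Arguments. Unset Strict Implicit. Unset Printing Implicit Defensive.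
Import GRing.Theory.
Local Open Scope ring_scope.

Section IsLinear.
Variables (K : fieldType) (U W : lmodType K) (f : U -> W).
Hypothesis f_lin : is_linear f.

Lemma is_linearD x y : f (x + y) = f x + f y.
Proof. by have := f_lin 1 x y; rewrite !scale1r. Qed.

Lemma is_linear0 : f 0 = 0.
Proof. by apply: (@addrI _ (f 0)); rewrite -is_linearD !addr0. Qed.

Lemma is_linearN x : f (- x) = - f x.
Proof. by apply: (@addrI _ (f x)); rewrite -is_linearD !subrr is_linear0. Qed.

Lemma is_linearB x y : f (x - y) = f x - f y.
Proof. by rewrite is_linearD is_linearN. Qed.

Lemma is_linearZ a x : f (a *: x) = a *: f x.
Proof. by have := f_lin a x 0; rewrite !addr0 is_linear0 addr0. Qed.

End IsLinear.

Lemma jacobi_terms_regroup (M : zmodType)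
    (a1 a2 a3 a4 a5 b1 b2 b3 b4 b5 c1 c2 c3 c4 c5 : M) :
  a1 + b1 + c1 + a2 + b2 + c2 = 0 ->
  a3 + b4 + c5 = 0 -> b3 + c4 + a5 = 0 -> c3 + a4 + b5 = 0 ->
  (a1 + (a2 + a3 + a4) + a5) + (b1 + (b2 + b3 + b4) + b5)
    + (c1 + (c2 + c3 + c4) + c5) = 0.
Proof.
move=> cocycle rep_a rep_b rep_c.
suff -> : (a1 + (a2 + a3 + a4) + a5) + (b1 + (b2 + b3 + b4) + b5)
    + (c1 + (c2 + c3 + c4) + c5)
  = (a1 + b1 + c1 + a2 + b2 + c2)
    + (a3 + b4 + c5) + (b3 + c4 + a5) + (c3 + a4 + b5).
  by rewrite cocycle rep_a rep_b rep_c !addr0.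
by rewrite !addrA [LHS](ACl (1*6*11*2*7*12*3*9*15*8*14*5*13*4*10)%AC).
Qed.

Section SumMap.
Variables (K : fieldType) (L V : lmodType K).

Lemma is_linear_sum_map (f : L -> L) (g : V -> V) :
  is_linear f -> is_linear g -> is_linear (sum_map f g).
Proof. by move=> f_lin g_lin a [x u] [y v]; rewrite /sum_map f_lin g_lin. Qed.

Lemma sum_map_comm (f f' : L -> L) (g g' : V -> V) :
  (forall x, f (f' x) = f' (f x)) -> (forall v, g (g' v) = g' (g v)) ->
  forall p, sum_map f g (sum_map f' g' p) = sum_map f' g' (sum_map f g p).
Proof. by move=> fC gC [x u]; rewrite /sum_map /= fC gC. Qed.

End SumMap.

Section ExtensionBracket.
Variables (K : fieldType) (L V : lmodType K).
Variables (delta : L -> L -> L) (alpha beta : L -> L) (alphaV betaV : V -> V).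
Variables (ll : L -> V -> V) (lr : V -> L -> V) (theta : L -> L -> V).

Local Notation d := (ext_bracket delta theta ll lr).
Local Notation aM := (sum_map alpha alphaV).
Local Notation bM := (sum_map beta betaV).

Lemma ext_bracket_bilinear :
  is_bilinear delta -> is_bilinear theta -> is_bilinear ll -> is_bilinear lr ->
  is_bilinear d.
Proof.
move=> [dl dr] [tl tr] [ll_l ll_r] [lr_l lr_r]; split.
- move=> [y w] a [x u] [x' u']; congr (_, _); first exact: dl.
  rewrite /= (tl y) (ll_l w) (lr_l y) !scalerDr !addrA.
  by rewrite [LHS](ACl (1*3*5*2*4*6)%AC).
- move=> [x u] a [y w] [y' w']; congr (_, _); first exact: dr.
  rewrite /= (tr x) (ll_r x) (lr_r u) !scalerDr !addrA.
  by rewrite [LHS](ACl (1*3*5*2*4*6)%AC).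
Qed.

Lemma ext_bracket_skew :
  (forall x y, delta (beta x) (alpha y) = - delta (beta y) (alpha x)) ->
  (forall x y, theta (beta x) (alpha y) = - theta (beta y) (alpha x)) ->
  (forall y v, lr (betaV v) (alpha y) = - ll (beta y) (alphaV v)) ->
  forall p q, d (bM p) (aM q) = - d (bM q) (aM p).
Proof.
move=> dsk tsk rsk [x u] [y v]; congr (_, _); first exact: dsk.
by rewrite /= tsk !rsk !opprD opprK addrAC.
Qed.

Lemma two_cocycle_cyclic :
  two_cocycle delta alpha beta ll theta ->
  (forall x y, delta (beta x) (alpha y) = - delta (beta y) (alpha x)) ->
  (forall x, is_linear (ll x)) ->
  forall x y z,
    theta (beta (beta x)) (delta (beta y) (alpha z))
  + theta (beta (beta y)) (delta (beta z) (alpha x))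
  + theta (beta (beta z)) (delta (beta x) (alpha y))
  + ll (beta (beta x)) (theta (beta y) (alpha z))
  + ll (beta (beta y)) (theta (beta z) (alpha x))
  + ll (beta (beta z)) (theta (beta x) (alpha y)) = 0.
Proof.
move=> [[_ tr] tsk cocycle] dsk ll_r x y z.
have := cocycle x y z.
by rewrite (dsk x z) (tsk x z) (is_linearN (tr _)) (is_linearN (ll_r _)) !opprK.
Qed.

Lemma ext_bracket_jacobi :
  bihom_lie delta alpha beta ->
  bihom_rep delta alpha beta alphaV betaV ll lr ->
  two_cocycle delta alpha beta ll theta ->
  forall p q r,
    d (bM (bM p)) (d (bM q) (aM r)) + d (bM (bM q)) (d (bM r) (aM p))
  + d (bM (bM r)) (d (bM p) (aM q)) = 0.
Proof.
move=> [_ _ _ _ [dsk djac]] [[_ ll_r] _ _ rjac] theta_cocycle.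
move=> [x u] [y v] [z w]; congr (_, _); first exact: djac.
rewrite /= !(is_linearD (ll_r _)).
apply: jacobi_terms_regroup; rewrite ?rjac //.
exact: two_cocycle_cyclic.
Qed.

Lemma bihom_lie_ext :
  bihom_lie delta alpha beta ->
  abelian_bihom_lie alphaV betaV ->
  bihom_rep delta alpha beta alphaV betaV ll lr ->
  two_cocycle delta alpha beta ll theta ->
  bihom_lie d aM bM.
Proof.
move=> HL [_ aV_lin bV_lin abV _] HR HT.
have [d_bilin a_lin b_lin ab [dsk _]] := HL.
have [ll_bilin lr_bilin rsk _] := HR.
have [t_bilin tsk _] := HT.
split; [exact: ext_bracket_bilinear | exact: is_linear_sum_map
       | exact: is_linear_sum_map | exact: sum_map_comm | split].
- exact: ext_bracket_skew.
- exact: ext_bracket_jacobi.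
Qed.

Lemma bihom_extension_ext :
  bihom_lie delta alpha beta ->
  abelian_bihom_lie alphaV betaV ->
  bihom_rep delta alpha beta alphaV betaV ll lr ->
  two_cocycle delta alpha beta ll theta ->
  bihom_extension (fun _ _ => 0) alphaV betaV d aM bM delta alpha beta
    (@i0 K L V) (@pi0 K L V).
Proof.
move=> HL HV HR HT.
have [[d_l _] a_lin b_lin _ _] := HL.
have [[ll_l _] [_ lr_r] _ _] := HR.
have [[t_l _] _ _] := HT.
have d_lie := bihom_lie_ext HL HV HR HT.
split; split=> //.
- split.
  + move=> a u u'.
    by apply: injective_projections; rewrite /= ?scaler0 ?addr0.
  + by move=> v; rewrite /i0 /sum_map /= (is_linear0 a_lin).
  + by move=> v; rewrite /i0 /sum_map /= (is_linear0 b_lin).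
  + move=> v w; rewrite /i0 /ext_bracket /=.
    by rewrite (is_linear0 (d_l 0)) (is_linear0 (t_l 0)) (is_linear0 (ll_l w))
      (is_linear0 (lr_r v)) !addr0.
- by move=> u v [].
- by move=> x; exists (x, 0).
- move=> [x u]; rewrite /pi0 /i0; split=> [/= -> | [v [-> _]]] //.
  by exists u.
Qed.

End ExtensionBracket.

Section Shear.
Variables (K : fieldType) (L V : lmodType K) (h : L -> V).

Definition shear (p : (L * V)%type) : (L * V)%type := (p.1, p.2 - h p.1).

Hypothesis h_lin : is_linear h.

Lemma is_linear_shear : is_linear shear.
Proof.
move=> a [x u] [y v]; congr (_, _).
rewrite /= (is_linearD h_lin) (is_linearZ h_lin).
by rewrite scalerBr opprD !addrA [LHS](ACl (1*3*2*4)%AC).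
Qed.

Lemma bijective_shear : bijective shear.
Proof.
by exists (fun p => (p.1, p.2 + h p.1)) => [[x u] | [x u]];
  rewrite /shear /= ?subrK ?addrK.
Qed.

Lemma shear_i0 v : shear (@i0 K L V v) = @i0 K L V v.
Proof. by rewrite /shear /i0 /= (is_linear0 h_lin) subr0. Qed.

Lemma shear_sum_map (f : L -> L) (g : V -> V) :
  is_linear g -> (forall x, h (f x) = g (h x)) ->
  forall p, shear (sum_map f g p) = sum_map f g (shear p).
Proof.
by move=> g_lin hfg [x u]; rewrite /shear /sum_map /= (is_linearB g_lin) hfg.
Qed.

Lemma shear_ext_bracket (delta : L -> L -> L) (ll : L -> V -> V)
    (lr : V -> L -> V) (theta theta' : L -> L -> V) :
  (forall x, is_linear (ll x)) -> (forall y, is_linear (lr^~ y)) ->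
  (forall x y, theta' x y - theta x y = D1 delta ll lr h x y) ->
  forall p q, shear (ext_bracket delta theta ll lr p q)
            = ext_bracket delta theta' ll lr (shear p) (shear q).
Proof.
move=> ll_r lr_l cohom [x u] [y w]; congr (_, _).
rewrite /= (is_linearB (ll_r x)) (is_linearB (lr_l y)).
rewrite -[theta' x y](subrK (theta x y)) cohom /D1.
by rewrite !addrA [RHS](ACl (4*5*7*1*2*6*3*8)%AC) /= !addrK.
Qed.

End Shear.

Theorem mainTheorem4 (K : fieldType) (L V : lmodType K)
  (delta : L -> L -> L) (alpha beta : L -> L)
  (alphaV betaV : V -> V)
  (ll : L -> V -> V) (lr : V -> L -> V)
  (theta theta' : L -> L -> V) :
  bihom_lie delta alpha beta ->
  abelian_bihom_lie alphaV betaV ->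
  bihom_rep delta alpha beta alphaV betaV ll lr ->
  two_cocycle delta alpha beta ll theta ->
  two_cocycle delta alpha beta ll theta' ->
  (exists h : L -> V, C1 alpha beta alphaV betaV h /\
     forall x y, theta' x y - theta x y = D1 delta ll lr h x y) ->
  let d := ext_bracket delta theta ll lr in
  let d' := ext_bracket delta theta' ll lr in
  let aM := sum_map alpha alphaV in
  let bM := sum_map beta betaV in
  [/\ bihom_extension (fun _ _ => 0) alphaV betaV d aM bM delta alpha beta
        (@i0 K L V) (@pi0 K L V),
      bihom_extension (fun _ _ => 0) alphaV betaV d' aM bM delta alpha beta
        (@i0 K L V) (@pi0 K L V) &
      equivalent_extensions d aM bM (@i0 K L V) (@pi0 K L V)
                            d' aM bM (@i0 K L V) (@pi0 K L V)].
Proof.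
move=> HL HV HR HT HT' [h [[h_lin h_alpha h_beta] cohom]] d d' aM bM.
have [_ aV_lin bV_lin _ _] := HV.
have [[_ ll_r] [lr_l _] _ _] := HR.
split; try exact: bihom_extension_ext.
exists id, id, (shear h); split=> //; last exact: shear_i0.
split; try exact: bihom_lie_ext; last exact: bijective_shear.
split; [exact: is_linear_shear | exact: shear_sum_map | exact: shear_sum_map |].
exact: shear_ext_bracket.
Qed.
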